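(* There are absolute constants $C,c_1,c_2>0$ such that the following holds. Let $k\ge1$ be an integer and let $f\in\ell^2(V,w)$ be nonnegative with $\mathrm{vol}(\mathrm{supp}(f))\le\mathrm{vol}(V)/2$ and $\mathcal R(f)>0$, and set $\delta=\phi(f)^2/\mathcal R(f)$. Then at least one of the following holds: (i) $\phi(f)\le Ck\,\mathcal R(f)$; (ii) there exist $k$ disjointly supported nonzero functions $f_1,\dots,f_k\in\ell^2(V,w)$ such that for all $i$, $\mathrm{supp}(f_i)\subseteq\mathrm{supp}(f)$ and $\mathcal R(f_i)\le Ck^2\,\mathcal R(f)/\delta$; moreover, for each $i$ there are reals $0<a_i<b_i$ with $c_1a_i/k\le b_i-a_i\le c_2a_i/k$ such that $\mathrm{supp}(f_i)\subseteq\{v: a_i\le f(v)\le b_i\}$.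
   Context: $G=(V,E,w)$ finite undirected, positive edge weights, $w(v)=\sum_{u\sim v}w(u,v)\ge1$, $\mathrm{vol}(S)=\sum_{v\in S}w(v)$, $\mathrm{supp}(f)=\{v:f(v)\ne0\}$. $\|f\|_w^2=\sum_vw(v)f(v)^2$, $\mathcal R(f)=\sum_{\{u,v\}\in E}w(u,v)(f(u)-f(v))^2/\|f\|_w^2$. Conductance $\phi(S)=w(E(S,\overline S))/\min\{\mathrm{vol}(S),\mathrm{vol}(\overline S)\}$; $V_f(t)=\{v:f(v)\ge t\}$; $\phi(f)=\min\{\phi(V_f(t)):\emptyset\ne V_f(t)\ne V\}$. Functions are disjointly supported if their supports are pairwise disjoint. *)

From HB Require Import structures.
From Stdlib Require Import Reals.
From mathcomp Require Import all_boot.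
Set Implicit Arguments. Unset Strict Implicit. Unset Printing Implicit Defensive.

Open Scope R_scope.

Lemma Rplus_assoc' : associative Rplus.
Proof. intros x y z; symmetry; apply Rplus_assoc. Qed.
Lemma Rplus_comm' : commutative Rplus.
Proof. intros x y; apply Rplus_comm. Qed.
Lemma Rplus_0_l' : left_id (IZR 0) Rplus.
Proof. intros x; apply Rplus_0_l. Qed.
HB.instance Definition _ :=
  Monoid.isComLaw.Build R (IZR 0) Rplus Rplus_assoc' Rplus_comm' Rplus_0_l'.

Definition sumR (V : finType) (P : pred V) (F : V -> R) : R :=
  \big[Rplus/0]_(v : V | P v) F v.

Definition Rneqb (x y : R) : bool := if Req_EM_T x y then false else true.
Definition Rleb (x y : R) : bool := if Rle_dec x y then true else false.

(* A weighted graph on the finite vertex set V, given by a symmetric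
   nonnegative weight function w with no self-loops; {u,v} is an edge iff
   w u v > 0 (so edge weights are positive). *)
Definition weighted_graph (V : finType) (w : V -> V -> R) : Prop :=
  (forall u v, w u v = w v u) /\ (forall u v, 0 <= w u v) /\
  (forall v, w v v = 0).

Definition deg (V : finType) (w : V -> V -> R) (v : V) : R :=
  sumR predT (fun u => w u v).

Definition vol (V : finType) (w : V -> V -> R) (S : pred V) : R :=
  sumR S (deg w).

Definition supp (V : finType) (f : V -> R) : pred V := fun v => Rneqb (f v) 0.

Definition normw2 (V : finType) (w : V -> V -> R) (f : V -> R) : R :=
  sumR predT (fun v => deg w v * (f v) ^ 2).

(* sum over edges {u,v} of w(u,v)(f(u)-f(v))^2; each unordered edge appears
   twice in the ordered double sum and there are no loops. *)
Definition edge_energy (V : finType) (w : V -> V -> R) (f : V -> R) : R :=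
  / 2 * sumR predT (fun u => sumR predT (fun v => w u v * (f u - f v) ^ 2)).

Definition rayleigh (V : finType) (w : V -> V -> R) (f : V -> R) : R :=
  edge_energy w f / normw2 w f.

Definition cut (V : finType) (w : V -> V -> R) (S : pred V) : R :=
  sumR S (fun u => sumR (predC S) (fun v => w u v)).

Definition conductance (V : finType) (w : V -> V -> R) (S : pred V) : R :=
  cut w S / Rmin (vol w S) (vol w (predC S)).

Definition level_set (V : finType) (f : V -> R) (t : R) : pred V :=
  fun v => Rleb t (f v).

Definition nontrivial (V : finType) (S : pred V) : Prop :=
  (exists v, S v) /\ (exists v, ~~ S v).

Definition is_phi_f (V : finType) (w : V -> V -> R) (f : V -> R) (x : R) : Prop :=
  (exists t, nontrivial (level_set f t) /\ x = conductance w (level_set f t)) /\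
  (forall t, nontrivial (level_set f t) -> x <= conductance w (level_set f t)).

From HB Require Import structures.
From Stdlib Require Import Reals Lra Psatz FunctionalExtensionality Classical.
From mathcomp Require Import all_boot zify.
Open Scope R_scope.
Set Implicit Arguments. Unset Strict Implicit.

(* Let R = R(f), E = E(f) and N = ||f||_w^2, and let phi be
   the threshold conductance of f.  Cover the range of f by a grid
   L = p_0 < p_1 < ... < p_n in which every dyadic block [L 2^m, L 2^(m+1)]
   is cut into k cells of equal width, so that the cell [p_j, p_(j+1)] has
   width between p_j/(2k) and p_j/k, and 4L lies below every nonzero value of
   f.  Composing f with the tent of a cell gives T_j, supported where
   p_j < f < p_(j+1); tents of distinct cells are disjointly supported.
   A cell is good if T_j <> 0 and R(T_j) <= X := 2^20 k^2 R / delta.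

   With at least k good cells, their tents give alternative (ii).  Otherwise
   let h be the sum over the bad cells of the primitives of their tents,
   evaluated at f.  The co-area inequality (proved by peeling h layer by
   layer, each layer being a level set of f inside supp f) gives
   2 phi mass(h) <= variation(h).  Fewer than k of the 2k cells below any
   value x of f are good, so h >= x^2/(256 k) and mass(h) >= N/(256 k).  On
   the other side variation(h) <= (2 + lam) E + (2/lam) sum_bad ||T_j||^2, a
   bad tent has ||T_j||^2 <= E(T_j)/X, and sum_j E(T_j) <= E.  Taking
   lam = phi/(512 k R) yields phi <= 2^20 k R, alternative (i). *)

Lemma bigR_le (I : Type) (r : seq I) (P : pred I) (F G : I -> R) :
  (forall i, P i -> F i <= G i) ->
  \big[Rplus/0]_(i <- r | P i) F i <= \big[Rplus/0]_(i <- r | P i) G i.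
Proof.
move=> H; apply: (big_ind2 (fun x y => x <= y)) => //; [lra | intros; lra].
Qed.

Lemma bigR_ge0 (I : Type) (r : seq I) (P : pred I) (F : I -> R) :
  (forall i, P i -> 0 <= F i) -> 0 <= \big[Rplus/0]_(i <- r | P i) F i.
Proof.
move=> H; apply: (big_ind (fun x => 0 <= x)) => //; [lra | intros; lra].
Qed.

Lemma bigR_scal (I : Type) (r : seq I) (P : pred I) (F : I -> R) (c : R) :
  c * \big[Rplus/0]_(i <- r | P i) F i = \big[Rplus/0]_(i <- r | P i) (c * F i).
Proof.
apply: (big_ind2 (fun x y => c * x = y)) => //; [lra | intros; subst; lra].
Qed.

Lemma bigR_abs (I : Type) (r : seq I) (P : pred I) (F : I -> R) :
  Rabs (\big[Rplus/0]_(i <- r | P i) F i) <= \big[Rplus/0]_(i <- r | P i) Rabs (F i).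
Proof.
apply: (big_ind2 (fun x y => Rabs x <= y)) => //.
- rewrite Rabs_R0; lra.
- move=> x1 x2 y1 y2 H1 H2; apply: Rle_trans (Rabs_triang _ _) _; lra.
- move=> i _; lra.
Qed.

Lemma bigR_sub (I : Type) (r : seq I) (P : pred I) (F G : I -> R) :
  \big[Rplus/0]_(i <- r | P i) F i - \big[Rplus/0]_(i <- r | P i) G i =
  \big[Rplus/0]_(i <- r | P i) (F i - G i).
Proof.
have -> : \big[Rplus/0]_(i <- r | P i) F i =
          \big[Rplus/0]_(i <- r | P i) ((F i - G i) + G i).
  by apply: eq_bigr => i _; ring.
rewrite big_split /=; ring.
Qed.

Lemma bigR_le_nat (m n : nat) (F G : nat -> R) :
  (forall i, (m <= i < n)%N -> F i <= G i) ->
  \big[Rplus/0]_(m <= i < n) F i <= \big[Rplus/0]_(m <= i < n) G i.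
Proof.
move=> H; rewrite big_nat_cond [X in _ <= X]big_nat_cond.
by apply: bigR_le => i /andP [Hi _]; apply: H.
Qed.

Lemma bigR_const_nat (m t : nat) (c : R) :
  \big[Rplus/0]_(m <= i < m + t) c = INR t * c.
Proof.
elim: t => [|t IH]; first by rewrite addn0 big_geq //=; lra.
rewrite addnS big_nat_recr ?leq_addr // IH S_INR /=; ring.
Qed.

Lemma bigR_count (P : pred nat) (n : nat) :
  \big[Rplus/0]_(0 <= j < n) (if P j then 1 else 0) = INR (count P (iota 0 n)).
Proof.
elim: n => [|n IH]; first by rewrite big_geq.
rewrite big_nat_recr // IH -addn1 iotaD count_cat /= addn0 plus_INR add0n.
by case: (P n).
Qed.

Lemma sumR_cond (V : finType) (P : pred V) (F : V -> R) :
  sumR P F = sumR predT (fun v => if P v then F v else 0).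
Proof. by rewrite /sumR big_mkcond. Qed.

Lemma sumR_le (V : finType) (P : pred V) (F G : V -> R) :
  (forall v, P v -> F v <= G v) -> sumR P F <= sumR P G.
Proof. exact: bigR_le. Qed.

Lemma sumR_ge0 (V : finType) (P : pred V) (F : V -> R) :
  (forall v, P v -> 0 <= F v) -> 0 <= sumR P F.
Proof. exact: bigR_ge0. Qed.

Lemma sumR_ext (V : finType) (P : pred V) (F G : V -> R) :
  (forall v, F v = G v) -> sumR P F = sumR P G.
Proof. by move=> H; apply: eq_bigr. Qed.

Lemma sumR_add (V : finType) (P : pred V) (F G : V -> R) :
  sumR P (fun v => F v + G v) = sumR P F + sumR P G.
Proof. exact: big_split. Qed.

Lemma sumR_scal (V : finType) (P : pred V) (F : V -> R) (c : R) :
  c * sumR P F = sumR P (fun v => c * F v).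
Proof. exact: bigR_scal. Qed.

Lemma sumR_zero (V : finType) (P : pred V) (F : V -> R) :
  (forall v, P v -> F v = 0) -> sumR P F = 0.
Proof. by move=> H; apply: big1. Qed.

Lemma sumR_ge_term (V : finType) (P : pred V) (F : V -> R) (v : V) :
  P v -> (forall u, P u -> 0 <= F u) -> F v <= sumR P F.
Proof.
move=> Pv H; rewrite /sumR (bigD1 v) //=.
have : 0 <= \big[Rplus/0]_(i | P i && (i != v)) F i.
  by apply: bigR_ge0 => i /andP [Pi _]; apply: H.
lra.
Qed.

Lemma exists_min (V : finType) (P : pred V) (g : V -> R) :
  (exists v, P v) -> exists v0, P v0 /\ forall v, P v -> g v0 <= g v.
Proof.
move=> [v Pv].
suff [v0 [Pv0 Hmin]] : exists v0, P v0 /\ forall u, u \in enum V -> P u -> g v0 <= g u.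
  by exists v0; split=> // u; apply: Hmin; rewrite mem_enum.
have : has P (enum V) by apply/hasP; exists v; rewrite ?mem_enum.
elim: (enum V) => //= a s IH Hhas.
have [Hs|Hs] := boolP (has P s); last first.
  have Pa : P a by move: Hhas; rewrite (negbTE Hs) orbF.
  exists a; split=> // u; rewrite in_cons => /orP [/eqP -> _|us Pu]; first lra.
  by move/hasPn: Hs => /(_ u us); rewrite Pu.
have [v0 [Pv0 Hv0]] := IH Hs.
have [[Pa Hlt]|Hno] := classic (P a /\ g a < g v0).
- exists a; split=> // u; rewrite in_cons => /orP [/eqP -> _|us Pu]; first lra.
  have := Hv0 u us Pu; lra.
- exists v0; split=> // u; rewrite in_cons => /orP [/eqP -> Pu|us Pu]; last exact: Hv0.
  by apply: Rnot_lt_le => Hlt; apply: Hno.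
Qed.

Definition Rltb (x y : R) : bool := if Rlt_dec x y then true else false.

Lemma RltbP x y : Rltb x y = true <-> x < y.
Proof. by rewrite /Rltb; case: Rlt_dec. Qed.

Lemma RneqbP x y : Rneqb x y = true <-> x <> y.
Proof. by rewrite /Rneqb; case: Req_EM_T => H; split => //; congruence. Qed.

Lemma RneqbF x y : Rneqb x y = false <-> x = y.
Proof. by rewrite /Rneqb; case: Req_EM_T. Qed.

Lemma RlebP x y : Rleb x y = true <-> x <= y.
Proof. by rewrite /Rleb; case: Rle_dec. Qed.

Lemma min_positive_value (V : finType) (f : V -> R) (v0 : V) :
  (forall v, 0 <= f v) -> f v0 <> 0 ->
  exists mu, 0 < mu /\ forall v, f v <> 0 -> mu <= f v.
Proof.
move=> Hf0 Hv0.
have Hs : supp f v0 by apply/RneqbP.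
have [vm [/RneqbP Hvm Hmin]] := exists_min f (ex_intro _ v0 Hs).
exists (f vm); split; first by have := Hf0 vm; lra.
by move=> v Hv; apply: Hmin; apply/RneqbP.
Qed.

Ltac split_minmax := cbv [Rmax Rmin Rabs];
  repeat match goal with
  | |- context [Rle_dec ?a ?b] => destruct (Rle_dec a b)
  | |- context [Rcase_abs ?a] => destruct (Rcase_abs a)
  | _ : context [Rle_dec ?a ?b] |- _ => destruct (Rle_dec a b)
  | _ : context [Rcase_abs ?a] |- _ => destruct (Rcase_abs a)
  end.

Lemma sqr_le_mul a o d : Rabs a <= Rabs o -> Rabs o <= Rabs d -> a ^ 2 <= Rabs d * Rabs o.
Proof. move=> H1 H2; rewrite -pow2_abs; have := Rabs_pos a; nra. Qed.

Lemma cross_term_bound o a b lam : 0 < lam -> 0 <= o ->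
  o * (a + b + o) <= (1 + lam / 2) * o ^ 2 + / lam * (a ^ 2 + b ^ 2).
Proof.
move=> Hl Ho.
have Ht : lam * / lam = 1 by rewrite Rinv_r; lra.
have Htp : 0 < / lam by apply: Rinv_0_lt_compat.
have H1 : 2 * lam * o * (a + b) <= lam ^ 2 * o ^ 2 + 2 * (a ^ 2 + b ^ 2).
  have := pow2_ge_0 (lam * o - (a + b)); have := pow2_ge_0 (a - b); nra.
have H2 := Rmult_le_compat_l _ _ _ (Rlt_le _ _ Htp) H1.
have E1 : / lam * (2 * lam * o * (a + b)) = 2 * (o * (a + b)).
  transitivity (2 * (lam * / lam) * (o * (a + b))); [ring | rewrite Ht; ring].
have E2 : / lam * (lam ^ 2 * o ^ 2 + 2 * (a ^ 2 + b ^ 2)) =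
          lam * o ^ 2 + 2 * / lam * (a ^ 2 + b ^ 2).
  transitivity ((lam * / lam) * (lam * o ^ 2) + 2 * / lam * (a ^ 2 + b ^ 2));
    [ring | rewrite Ht; ring].
nra.
Qed.

Section Graph.
Variables (V : finType) (w : V -> V -> R).
Hypothesis Hw : weighted_graph w.

Lemma weight_ge0 u v : 0 <= w u v.
Proof. by case: Hw => _ []. Qed.

Lemma deg_ge0 v : 0 <= deg w v.
Proof. by apply: sumR_ge0 => u _; apply: weight_ge0. Qed.

Lemma vol_mono (P Q : pred V) : (forall v, P v -> Q v) -> vol w P <= vol w Q.
Proof.
move=> H; rewrite /vol (sumR_cond P) (sumR_cond Q); apply: sumR_le => v _.
case Pv: (P v); first by rewrite (H v Pv); lra.
by case: (Q v); [apply: deg_ge0 | lra].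
Qed.

Lemma vol_compl (P : pred V) : vol w (predC P) = vol w predT - vol w P.
Proof.
suff: vol w predT = vol w P + vol w (predC P) by lra.
rewrite /vol (sumR_cond P) (sumR_cond (predC P)) -sumR_add.
by apply: sumR_ext => v /=; case: (P v) => /=; lra.
Qed.

Lemma deg_le_vol (P : pred V) v : P v -> deg w v <= vol w P.
Proof. by move=> Pv; apply: sumR_ge_term => // u _; apply: deg_ge0. Qed.

Lemma normw2_ge0 (h : V -> R) : 0 <= normw2 w h.
Proof. by apply: sumR_ge0 => v _; apply: Rmult_le_pos; [apply: deg_ge0 | apply: pow2_ge_0]. Qed.

Lemma edge_energy_ge0 (h : V -> R) : 0 <= edge_energy w h.
Proof.
apply: Rmult_le_pos; first lra.
apply: sumR_ge0 => u _; apply: sumR_ge0 => v _.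
by apply: Rmult_le_pos; [apply: weight_ge0 | apply: pow2_ge_0].
Qed.

Lemma rayleigh_pos_support (h : V -> R) : 0 < rayleigh w h -> exists v, h v <> 0.
Proof.
move=> HR; apply: NNPP => Hnone; move: HR; rewrite /rayleigh.
suff -> : normw2 w h = 0 by rewrite /Rdiv Rinv_0; lra.
apply: sumR_zero => v _.
have -> : h v = 0 by apply: NNPP => Hv; apply: Hnone; exists v.
ring.
Qed.

Lemma pair_sum (g : V -> R) :
  sumR predT (fun u => sumR predT (fun v => w u v * (g v + g u))) =
  2 * sumR predT (fun v => deg w v * g v).
Proof.
have [Hsym _] := Hw.
have E1 : sumR predT (fun u => sumR predT (fun v => w u v * g v)) =
          sumR predT (fun v => deg w v * g v).
  rewrite /sumR exchange_big; apply: eq_bigr => v _.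
  by rewrite /deg /sumR Rmult_comm bigR_scal; apply: eq_bigr => u _; ring.
have E2 : sumR predT (fun u => sumR predT (fun v => w u v * g u)) =
          sumR predT (fun v => deg w v * g v).
  apply: sumR_ext => u; rewrite /deg Rmult_comm sumR_scal.
  by apply: sumR_ext => v; rewrite (Hsym v u); ring.
have -> : forall x, 2 * x = x + x by move=> x; ring.
rewrite -{1}E1 -E2 -sumR_add; apply: sumR_ext => u.
by rewrite -sumR_add; apply: sumR_ext => v; ring.
Qed.

Definition mass (h : V -> R) : R := sumR predT (fun v => deg w v * h v).

Definition variation (h : V -> R) : R :=
  sumR predT (fun u => sumR predT (fun v => w u v * Rabs (h u - h v))).

Lemma variation_ge0 h : 0 <= variation h.
Proof.
apply: sumR_ge0 => u _; apply: sumR_ge0 => v _.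
by apply: Rmult_le_pos; [apply: weight_ge0 | apply: Rabs_pos].
Qed.

Lemma mass_supp0 h : (forall v, ~~ supp h v) -> mass h = 0.
Proof.
move=> H; apply: sumR_zero => v _.
have /RneqbF -> : supp h v = false by apply/negbTE/H.
ring.
Qed.

Definition indicator (P : pred V) (v : V) : R := if P v then 1 else 0.

(* The variation of an indicator counts every cut edge from both sides. *)
Lemma indicator_variation (P : pred V) : variation (indicator P) = 2 * cut w P.
Proof.
have [Hsym _] := Hw.
have E1 u : sumR predT (fun v => w u v * Rabs (indicator P u - indicator P v)) =
   if P u then sumR (predC P) (fun v => w u v) else sumR P (fun v => w u v).
  rewrite /indicator; case Pu: (P u).
  - rewrite (sumR_cond (predC P)); apply: sumR_ext => v /=; case: (P v) => /=;
    [rewrite Rminus_diag Rabs_R0 | rewrite Rminus_0_r Rabs_R1]; lra.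
  - rewrite (sumR_cond P); apply: sumR_ext => v /=; case: (P v) => /=;
    [rewrite Rminus_0_l Rabs_Ropp Rabs_R1 | rewrite Rminus_diag Rabs_R0]; lra.
rewrite /variation (sumR_ext _ E1).
have -> : sumR predT (fun u => if P u then sumR (predC P) (fun v => w u v)
                                else sumR P (fun v => w u v))
  = sumR predT (fun u => if P u then sumR (predC P) (fun v => w u v) else 0)
  + sumR predT (fun u => if predC P u then sumR P (fun v => w u v) else 0).
  by rewrite -sumR_add; apply: sumR_ext => u /=; case: (P u) => /=; lra.
rewrite -!sumR_cond /cut.
have -> : sumR (predC P) (fun u => sumR P (fun v => w u v)) =
          sumR P (fun u => sumR (predC P) (fun v => w u v)).
  by rewrite /sumR exchange_big; apply: eq_bigr => u _; apply: eq_bigr => v _.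
lra.
Qed.

Definition peel (P : pred V) (s : R) (h : V -> R) (v : V) : R :=
  if P v then h v - s else 0.

Lemma peel_mass (P : pred V) s h :
  (forall v, ~~ P v -> h v = 0) -> mass h = mass (peel P s h) + s * vol w P.
Proof.
move=> Hout; rewrite /mass /vol (sumR_cond P) sumR_scal -sumR_add.
apply: sumR_ext => v; rewrite /peel; case: (boolP (P v)) => [_|/Hout ->]; ring.
Qed.

Lemma peel_variation (P : pred V) s h : 0 <= s ->
  (forall v, P v -> s <= h v) -> (forall v, ~~ P v -> h v = 0) ->
  variation h = variation (peel P s h) + s * (2 * cut w P).
Proof.
move=> Hs Hin Hout.
rewrite -indicator_variation /variation sumR_scal -sumR_add; apply: sumR_ext => u.
rewrite sumR_scal -sumR_add; apply: sumR_ext => v.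
suff -> : Rabs (h u - h v) =
  Rabs (peel P s h u - peel P s h v) + s * Rabs (indicator P u - indicator P v).
  by ring.
rewrite /peel /indicator.
case: (boolP (P u)) => [/Hin Hu|/Hout ->]; case: (boolP (P v)) => [/Hin Hv|/Hout ->];
  split_minmax; lra.
Qed.

Lemma peel_card h v1 : supp h v1 -> (#|supp (peel (supp h) (h v1) h)| < #|supp h|)%N.
Proof.
move=> Hv1; apply: proper_card; apply/properP; split.
  apply/subsetP => v; rewrite !unfold_in /peel /supp.
  by case: (Rneqb (h v) 0) => //; move/RneqbP.
exists v1; first by rewrite unfold_in.
rewrite unfold_in /peel Hv1 Rminus_diag.
by apply/negP => /RneqbP; apply.
Qed.

Section Coarea.
Variable f : V -> R.
Hypotheses (Hdeg : forall v, 1 <= deg w v)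
           (Hvol : vol w (supp f) <= vol w predT / 2).
Variable phi : R.
Hypothesis Hphi :
  forall t, nontrivial (level_set f t) -> phi <= conductance w (level_set f t).

(* A nonempty level set inside supp f has at most half of the volume, so its
   conductance is cut/vol. *)
Lemma level_set_cut t :
  (exists v, level_set f t v) -> (forall v, level_set f t v -> f v <> 0) ->
  phi * vol w (level_set f t) <= cut w (level_set f t).
Proof.
move=> [v1 Hv1] Hsub; set S := level_set f t.
have [v0 Hv0] : exists v, f v = 0.
  apply: NNPP => Hnone.
  have Hall : vol w (supp f) = vol w predT.
    rewrite /vol /sumR; apply: eq_bigl => v /=.
    by apply/RneqbP => Hv; apply: Hnone; exists v.
  have := deg_le_vol (P := predT) (v := v1) isT; have := Hdeg v1; lra.
have Hnt : nontrivial S.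
  by split; [exists v1 | exists v0; apply/negP => /Hsub].
have HS : vol w S <= vol w (supp f).
  by apply: vol_mono => v Hv; apply/RneqbP; apply: Hsub.
have HS1 : deg w v1 <= vol w S := deg_le_vol Hv1.
have Hd1 := Hdeg v1.
have Hmin : Rmin (vol w S) (vol w (predC S)) = vol w S.
  by rewrite vol_compl; apply: Rmin_left; lra.
have := Hphi Hnt; rewrite /conductance -/S Hmin => H.
apply: (Rmult_le_reg_r (/ vol w S)); first by apply: Rinv_0_lt_compat; lra.
rewrite Rmult_assoc Rinv_r; lra.
Qed.

Lemma support_level_set h v1 :
  (forall v, 0 <= h v) -> (forall u v, f u <= f v -> h u <= h v) ->
  supp h v1 -> (forall v, supp h v -> f v1 <= f v) ->
  supp h = level_set f (f v1).
Proof.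
move=> Hh0 Hmon Hv1 Hmin; apply: functional_extensionality => v.
rewrite /level_set; case Pv: (supp h v); first by symmetry; apply/RlebP; apply: Hmin.
symmetry; apply/negbTE/negP => /RlebP /Hmon Hle.
move: Hv1 Pv => /RneqbP Hv1 /RneqbF Hv.
have := Hh0 v1; lra.
Qed.

(* By
   induction on the support, peeling off the bottom layer, whose support is
   a level set of f. *)
Theorem coarea_inequality (h : V -> R) :
  (forall v, 0 <= h v) -> (forall u v, f u <= f v -> h u <= h v) ->
  (forall v, h v <> 0 -> f v <> 0) ->
  2 * phi * mass h <= variation h.
Proof.
move: {2}#|supp h| (leqnn #|supp h|) => n.
elim: n h => [|n IH] h Hcard Hh0 Hmon Hsupp.
  rewrite mass_supp0 ?Rmult_0_r; first exact: variation_ge0.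
  move=> v; apply/negP => Hv; move: Hcard.
  by rewrite leqn0 => /eqP /card0_eq /(_ v); rewrite !inE -topredE /= Hv.
have [[v0 Hv0]|Hnone] := classic (exists v, supp h v); last first.
  rewrite mass_supp0 ?Rmult_0_r; first exact: variation_ge0.
  by move=> v; apply/negP => Hv; apply: Hnone; exists v.
have [v1 [Hv1 Hmin]] := exists_min f (ex_intro _ v0 Hv0).
set s := h v1.
have Hs : 0 < s by move: Hv1 (Hh0 v1) => /RneqbP; rewrite /s; lra.
have Hlevel := support_level_set Hh0 Hmon Hv1 Hmin.
have Hin v : supp h v -> s <= h v by move/Hmin/Hmon.
have Hout v : ~~ supp h v -> h v = 0 by move/negbTE/RneqbF.
set h' := peel (supp h) s h.
have IH' : 2 * phi * mass h' <= variation h'.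
  apply: IH => [|v|u v Huv|v].
  - by rewrite -ltnS; apply: leq_trans Hcard; apply: peel_card.
  - rewrite /h' /peel; case: (boolP (supp h v)) => [/Hin|_]; lra.
  - have := Hmon u v Huv; rewrite /h' /peel.
    case Pu: (supp h u); case Pv: (supp h v) => Hle; try lra.
    + have : supp h v by rewrite Hlevel; apply/RlebP; have := Hmin u Pu; lra.
      by rewrite Pv.
    + have := Hin v Pv; lra.
  - rewrite /h' /peel; case Pv: (supp h v) => Hne; last by congruence.
    by apply: Hsupp; apply/RneqbP.
have Hcut : phi * vol w (supp h) <= cut w (supp h).
  rewrite Hlevel; apply: level_set_cut; first by exists v1; rewrite -Hlevel.
  by move=> v; rewrite -Hlevel => /RneqbP; apply: Hsupp.
rewrite (peel_mass s Hout) (peel_variation (Rlt_le _ _ Hs) Hin Hout) -/h'.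
have := Rmult_le_compat_l _ _ _ (Rlt_le _ _ Hs) Hcut; lra.
Qed.

End Coarea.
End Graph.

(* The threshold grid: the dyadic block [L 2^m, L 2^(m+1)] is cut into k
   cells of equal width, so that grid_pt (m * k + t) = L 2^m (1 + t/k). *)
Section Grid.
Variables (L : R) (k : nat).
Hypotheses (HL : 0 < L) (Hk : (0 < k)%N).

Definition cell_width (j : nat) : R := L * 2 ^ (j %/ k)%N / INR k.

Definition grid_pt (j : nat) : R := L + \big[Rplus/0]_(0 <= i < j) cell_width i.

Lemma INR_k_pos : 0 < INR k.
Proof. by apply: lt_0_INR; apply/ltP. Qed.

Lemma grid_pt_0 : grid_pt 0 = L.
Proof. rewrite /grid_pt big_geq //; lra. Qed.

Lemma grid_pt_S j : grid_pt j.+1 = grid_pt j + cell_width j.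
Proof. rewrite /grid_pt big_nat_recr //=; lra. Qed.

Lemma cell_width_pos j : 0 < cell_width j.
Proof.
apply: Rdiv_lt_0_compat; last exact: INR_k_pos.
by apply: Rmult_lt_0_compat => //; apply: pow_lt; lra.
Qed.

Lemma grid_pt_mono i j : (i <= j)%N -> grid_pt i <= grid_pt j.
Proof.
elim: j => [|j IH]; first by rewrite leqn0 => /eqP ->; lra.
rewrite leq_eqVlt => /orP [/eqP ->|Hij]; first lra.
rewrite grid_pt_S; have := IH Hij; have := cell_width_pos j; lra.
Qed.

Lemma grid_pt_le_S j : grid_pt j <= grid_pt j.+1.
Proof. exact: grid_pt_mono. Qed.

Lemma grid_pt_pos j : 0 < grid_pt j.
Proof. have := grid_pt_mono (leq0n j); rewrite grid_pt_0; lra. Qed.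

Lemma grid_pt_block m t : (t <= k)%N ->
  grid_pt (m * k + t) = L * 2 ^ m * (1 + INR t / INR k).
Proof.
have Hk' := INR_k_pos.
elim: m t => [|m IHm] t.
- elim: t => [|t IHt] Ht.
  + rewrite mul0n addn0 grid_pt_0 /=; field; lra.
  + rewrite mul0n add0n grid_pt_S.
    have := IHt (ltnW Ht); rewrite mul0n add0n => ->.
    rewrite /cell_width divn_small // S_INR /=; field; lra.
- elim: t => [|t IHt] Ht.
  + rewrite addn0 mulSn addnC IHm // /=; field; lra.
  + rewrite addnS grid_pt_S (IHt (ltnW Ht)).
    rewrite /cell_width divnMDl // divn_small // addn0 S_INR /=; field; lra.
Qed.

Lemma grid_pt_bounds j :
  L * 2 ^ (j %/ k)%N <= grid_pt j <= 2 * (L * 2 ^ (j %/ k)%N).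
Proof.
have Hk' := INR_k_pos.
have Hmod : (j %% k <= k)%N by apply: ltnW; apply: ltn_pmod.
rewrite [in grid_pt j](divn_eq j k) grid_pt_block //.
have Ht : INR (j %% k)%N <= INR k.
  by apply: le_INR; apply/leP; apply: ltnW; apply: ltn_pmod.
have Hp : 0 < L * 2 ^ (j %/ k)%N by apply: Rmult_lt_0_compat => //; apply: pow_lt; lra.
have H0 : 0 <= INR (j %% k)%N / INR k.
  by apply: Rmult_le_pos; [apply: pos_INR | apply: Rlt_le; apply: Rinv_0_lt_compat].
have H1 : INR (j %% k)%N / INR k <= 1.
  apply: (Rmult_le_reg_r (INR k)) => //; rewrite /Rdiv Rmult_assoc Rinv_l; lra.
split; nra.
Qed.

Lemma cell_width_ratio j :
  / 2 * (grid_pt j / INR k) <= cell_width j <= grid_pt j / INR k.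
Proof.
have Hk' := INR_k_pos; have [H1 H2] := grid_pt_bounds j.
rewrite /cell_width /Rdiv; have Hik : 0 < / INR k by apply: Rinv_0_lt_compat.
split; nra.
Qed.

Lemma grid_cell_of n x : L < x -> x <= grid_pt n ->
  exists j, (j < n)%N /\ grid_pt j <= x <= grid_pt j.+1.
Proof.
elim: n => [|n IH] H0 Hn; first by rewrite grid_pt_0 in Hn; lra.
case: (Rle_dec x (grid_pt n)) => H.
- by have [j [Hj Hx]] := IH H0 H; exists j; split => //; apply: ltnW.
- by exists n; split => //; lra.
Qed.

End Grid.

Lemma grid_covering (k : nat) (mu M : R) : (0 < k)%N -> 0 < mu -> mu <= M ->
  exists L n, 0 < L /\ 4 * L < mu /\ grid_pt L k n = M.
Proof.
move=> Hk Hmu HM.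
have [B HB] : exists B : nat, 4 * M / mu < 2 ^ B.
  have H2 : Rabs 2 > 1 by rewrite Rabs_right; lra.
  have [B HB] := Pow_x_infinity 2 H2 (4 * M / mu + 1).
  exists B; have := HB B (le_n B); rewrite Rabs_right; [lra | apply: Rle_ge].
  by apply: pow_le; lra.
have H2B : 0 < 2 ^ B by apply: pow_lt; lra.
exists (M / 2 ^ B), (B * k)%N; split; last split.
- by apply: Rdiv_lt_0_compat; lra.
- apply: (Rmult_lt_reg_r (2 ^ B / mu)); first by apply: Rdiv_lt_0_compat.
  have -> : 4 * (M / 2 ^ B) * (2 ^ B / mu) = 4 * M / mu by field; lra.
  have -> : mu * (2 ^ B / mu) = 2 ^ B by field; lra.
  lra.
- have Hk' := INR_k_pos Hk.
  rewrite -[(B * k)%N]addn0 grid_pt_block //=; field; lra.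
Qed.

(* Profiles on a single cell [p, q]: the ramp climbs from 0 to q - p, the
   tent is the distance to the nearer endpoint, and tent_primitive is the
   area under the tent; tent_area h r is the area under the tent of a cell of
   width h up to abscissa r. *)
Definition ramp (p q y : R) : R := Rmax p (Rmin y q) - p.
Definition tent (p q y : R) : R := Rmin (ramp p q y) (q - p - ramp p q y).
Definition tent_area (h r : R) : R := r ^ 2 / 2 - (Rmax 0 (r - h / 2)) ^ 2.
Definition tent_primitive (p q y : R) : R := tent_area (q - p) (ramp p q y).

Section OneCell.
Variables p q : R.
Hypothesis Hpq : p <= q.

Lemma ramp_bounds y : 0 <= ramp p q y <= q - p.
Proof. rewrite /ramp; split_minmax; split; lra. Qed.

Lemma ramp_mono y z : y <= z ->
  ramp p q y <= ramp p q z /\ ramp p q z - ramp p q y <= z - y.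
Proof. move=> Hyz; rewrite /ramp; split_minmax; split; lra. Qed.

Lemma ramp_lipschitz y z : Rabs (ramp p q z - ramp p q y) <= Rabs (z - y).
Proof.
wlog Hyz : y z / y <= z.
  move=> H; case: (Rle_dec y z) => Hyz; first exact: H.
  by rewrite Rabs_minus_sym (Rabs_minus_sym z); apply: H; lra.
have := ramp_mono Hyz; split_minmax; lra.
Qed.

Lemma tent_lipschitz y z :
  Rabs (tent p q y - tent p q z) <= Rabs (ramp p q y - ramp p q z).
Proof.
rewrite /tent; have := ramp_bounds y; have := ramp_bounds z.
move: (ramp p q y) (ramp p q z) => r s Hs Hr; split_minmax; lra.
Qed.

Lemma tent_support y : tent p q y <> 0 -> p < y < q.
Proof. rewrite /tent /ramp; split_minmax; lra. Qed.

Lemma tent_area_increment h r s : 0 <= r <= h -> 0 <= s <= h ->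
  Rabs (tent_area h s - tent_area h r) <=
  Rabs (s - r) * (Rmin r (h - r) + Rmin s (h - s) + Rabs (s - r)).
Proof.
wlog Hrs : r s / r <= s.
  move=> H Hr Hs; case: (Rle_dec r s) => Hrs; first exact: H.
  rewrite Rabs_minus_sym (Rabs_minus_sym s r).
  have -> : Rmin r (h - r) + Rmin s (h - s) = Rmin s (h - s) + Rmin r (h - r) by ring.
  by apply: H => //; lra.
move=> Hr Hs; rewrite /tent_area; split_minmax; nra.
Qed.

Lemma tent_primitive_increment y z :
  Rabs (tent_primitive p q z - tent_primitive p q y) <=
  Rabs (ramp p q z - ramp p q y) *
    (tent p q y + tent p q z + Rabs (ramp p q z - ramp p q y)).
Proof.
rewrite /tent_primitive /tent.
have := tent_area_increment (ramp_bounds y) (ramp_bounds z); lra.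
Qed.

Lemma tent_primitive_mono y z : y <= z -> tent_primitive p q y <= tent_primitive p q z.
Proof.
move=> Hyz; have := ramp_bounds y; have := ramp_bounds z; have [Hm _] := ramp_mono Hyz.
rewrite /tent_primitive /tent_area.
move: (ramp p q y) (ramp p q z) Hm => r s Hrs Hs Hr; split_minmax; nra.
Qed.

Lemma tent_primitive_low y : y <= p -> tent_primitive p q y = 0.
Proof.
move=> Hy; rewrite /tent_primitive /tent_area.
have -> : ramp p q y = 0 by rewrite /ramp; split_minmax; lra.
split_minmax; first [field | nra | exfalso; lra].
Qed.

Lemma tent_primitive_ge0 y : 0 <= tent_primitive p q y.
Proof.
have := @tent_primitive_mono (Rmin y p) y (Rmin_l y p).
by rewrite tent_primitive_low //; apply: Rmin_r.
Qed.

Lemma tent_primitive_full y : q <= y -> tent_primitive p q y = (q - p) ^ 2 / 4.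
Proof.
move=> Hy; rewrite /tent_primitive /tent_area.
have -> : ramp p q y = q - p by rewrite /ramp; split_minmax; lra.
split_minmax; first [field | nra | exfalso; lra].
Qed.

End OneCell.

Section Cells.
Variables (L : R) (k : nat).
Hypotheses (HL : 0 < L) (Hk : (0 < k)%N).

Definition cell_ramp (j : nat) (y : R) : R := ramp (grid_pt L k j) (grid_pt L k j.+1) y.
Definition cell_tent (j : nat) (y : R) : R := tent (grid_pt L k j) (grid_pt L k j.+1) y.
Definition cell_primitive (j : nat) (y : R) : R :=
  tent_primitive (grid_pt L k j) (grid_pt L k j.+1) y.

Let Hcell j := grid_pt_le_S HL Hk j.

Lemma cell_ramps_telescope n y :
  \big[Rplus/0]_(0 <= j < n) cell_ramp j y =
  Rmax (grid_pt L k 0) (Rmin y (grid_pt L k n)) - grid_pt L k 0.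
Proof.
elim: n => [|n IH]; first by rewrite big_geq //; split_minmax; lra.
rewrite big_nat_recr //= IH /cell_ramp /ramp.
have := Hcell n; have := grid_pt_mono HL Hk (leq0n n).
move: (grid_pt L k 0) (grid_pt L k n) (grid_pt L k n.+1) => a b c H1 H2.
split_minmax; lra.
Qed.

Lemma cell_ramps_variation n y z :
  \big[Rplus/0]_(0 <= j < n) Rabs (cell_ramp j z - cell_ramp j y) <= Rabs (z - y).
Proof.
wlog Hyz : y z / y <= z.
  move=> H; case: (Rle_dec y z) => Hyz; first exact: H.
  rewrite Rabs_minus_sym; under eq_bigr => j _ do rewrite Rabs_minus_sym.
  by apply: H; lra.
have E j : Rabs (cell_ramp j z - cell_ramp j y) = cell_ramp j z - cell_ramp j y.
  by apply: Rabs_right; have := ramp_mono (Hcell j) Hyz; rewrite /cell_ramp; lra.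
under eq_bigr => j _ do rewrite E.
rewrite -bigR_sub !cell_ramps_telescope.
move: (grid_pt L k 0) (grid_pt L k n) => a b; split_minmax; lra.
Qed.

Lemma cell_tents_energy n y z :
  \big[Rplus/0]_(0 <= j < n) (cell_tent j y - cell_tent j z) ^ 2 <= (y - z) ^ 2.
Proof.
apply: Rle_trans (_ : \big[Rplus/0]_(0 <= j < n)
   (Rabs (z - y) * Rabs (cell_ramp j z - cell_ramp j y)) <= _).
  apply: bigR_le => j _; apply: sqr_le_mul.
    rewrite /cell_ramp Rabs_minus_sym; exact: tent_lipschitz.
  exact: ramp_lipschitz.
rewrite -bigR_scal.
have -> : (y - z) ^ 2 = Rabs (z - y) * Rabs (z - y).
  by rewrite -pow2_abs Rabs_minus_sym /=; ring.
by apply: Rmult_le_compat_l; [apply: Rabs_pos | apply: cell_ramps_variation].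
Qed.

Definition bad_primitive (n : nat) (good : nat -> bool) (y : R) : R :=
  \big[Rplus/0]_(0 <= j < n) (if good j then 0 else cell_primitive j y).

Lemma bad_primitive_ge0 n good y : 0 <= bad_primitive n good y.
Proof.
apply: bigR_ge0 => j _; case: (good j); first lra.
exact: tent_primitive_ge0.
Qed.

Lemma bad_primitive_mono n good y z : y <= z ->
  bad_primitive n good y <= bad_primitive n good z.
Proof.
move=> Hyz; apply: bigR_le => j _; case: (good j); first lra.
exact: tent_primitive_mono.
Qed.

Lemma bad_primitive_low n good y : y <= L -> bad_primitive n good y = 0.
Proof.
move=> Hy; apply: big1 => j _; case: (good j) => //.
apply: tent_primitive_low; first exact: Hcell.
by apply: Rle_trans (grid_pt_mono HL Hk (leq0n j)); rewrite grid_pt_0.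
Qed.

Lemma bad_primitive_increment n good lam y z : 0 < lam ->
  Rabs (bad_primitive n good z - bad_primitive n good y) <=
  (1 + lam / 2) * (z - y) ^ 2 +
  / lam * \big[Rplus/0]_(0 <= j < n)
            (if good j then 0 else cell_tent j y ^ 2 + cell_tent j z ^ 2).
Proof.
move=> Hl; rewrite /bad_primitive bigR_sub.
apply: Rle_trans (bigR_abs _ _ _) _.
apply: Rle_trans (_ : \big[Rplus/0]_(0 <= j < n)
   ((1 + lam / 2) * (Rabs (z - y) * Rabs (cell_ramp j z - cell_ramp j y))
    + / lam * (if good j then 0 else cell_tent j y ^ 2 + cell_tent j z ^ 2)) <= _).
  apply: bigR_le => j _.
  have Ho : Rabs (cell_ramp j z - cell_ramp j y) <= Rabs (z - y) by apply: ramp_lipschitz.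
  have Ho2 : Rabs (cell_ramp j z - cell_ramp j y) ^ 2 <=
             Rabs (z - y) * Rabs (cell_ramp j z - cell_ramp j y).
    by apply: sqr_le_mul => //; rewrite Rabs_Rabsolu; lra.
  have Hil : 0 < / lam by apply: Rinv_0_lt_compat.
  case: (good j).
    rewrite Rminus_0_r Rabs_R0.
    have := Rabs_pos (z - y); have := Rabs_pos (cell_ramp j z - cell_ramp j y); nra.
  apply: Rle_trans (tent_primitive_increment (Hcell j) y z) _.
  apply: Rle_trans (cross_term_bound _ _ Hl (Rabs_pos _)) _.
  rewrite -/(cell_ramp j z) -/(cell_ramp j y) -/(cell_tent j y) -/(cell_tent j z).
  by apply: Rplus_le_compat_r; apply: Rmult_le_compat_l => //; lra.
rewrite big_split; apply: Rplus_le_compat; last by rewrite bigR_scal; apply: Rle_refl.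
rewrite -bigR_scal -bigR_scal; apply: Rmult_le_compat_l; first lra.
have -> : (z - y) ^ 2 = Rabs (z - y) * Rabs (z - y) by rewrite -pow2_abs /=; ring.
by apply: Rmult_le_compat_l; [apply: Rabs_pos | apply: cell_ramps_variation].
Qed.

Lemma cell_primitive_full j x : grid_pt L k j.+1 <= x ->
  x <= 8 * INR k * cell_width L k j ->
  x ^ 2 / (256 * INR k ^ 2) <= cell_primitive j x.
Proof.
move=> Hx Hw; have Hk' := INR_k_pos Hk.
rewrite /cell_primitive (tent_primitive_full (Hcell j) Hx) grid_pt_S.
have -> : grid_pt L k j + cell_width L k j - grid_pt L k j = cell_width L k j by ring.
have Hpos := cell_width_pos HL Hk j.
have -> : x ^ 2 / (256 * INR k ^ 2) = (x / (8 * INR k)) ^ 2 / 4 by field; lra.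
have Hxw : x / (8 * INR k) <= cell_width L k j.
  apply: (Rmult_le_reg_r (8 * INR k)); first lra.
  rewrite /Rdiv Rmult_assoc Rinv_l; lra.
have Hxpos : 0 <= x / (8 * INR k).
  apply: Rmult_le_pos; first by have := grid_pt_pos HL Hk j.+1; lra.
  by apply: Rlt_le; apply: Rinv_0_lt_compat; lra.
have := pow_incr _ _ 2 (conj Hxpos Hxw); lra.
Qed.

Lemma bad_primitive_block n good lo c x :
  (count good (iota 0 n) < k)%N -> (lo + 2 * k <= n)%N -> 0 <= c ->
  (forall i, (lo <= i < lo + 2 * k)%N -> c <= cell_primitive i x) ->
  c * INR k <= bad_primitive n good x.
Proof.
move=> Hcount Hn Hc Hcell_c; set hi := (lo + 2 * k)%N.
have Hlo : (lo <= hi)%N by apply: leq_addr.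
have Hsplit (F : nat -> R) : \big[Rplus/0]_(0 <= i < n) F i =
    \big[Rplus/0]_(0 <= i < lo) F i + \big[Rplus/0]_(lo <= i < hi) F i +
    \big[Rplus/0]_(hi <= i < n) F i.
  rewrite (big_cat_nat (leq0n lo) (leq_trans Hlo Hn)) (big_cat_nat Hlo Hn) /=; ring.
have Hpos (F : nat -> R) m1 m2 : (forall i, 0 <= F i) ->
    0 <= \big[Rplus/0]_(m1 <= i < m2) F i.
  by move=> HF; apply: bigR_ge0 => i _.
have Hbad i : 0 <= (if good i then 0 else cell_primitive i x).
  by case: (good i); [lra | apply: tent_primitive_ge0].
have Hind i : 0 <= (if good i then 1 else 0) by case: (good i); lra.
have Hmid : c * \big[Rplus/0]_(lo <= i < hi) (1 - (if good i then 1 else 0))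
    <= \big[Rplus/0]_(lo <= i < hi) (if good i then 0 else cell_primitive i x).
  rewrite bigR_scal; apply: bigR_le_nat => i Hi.
  by case: (good i); [lra | have := Hcell_c i Hi; lra].
have Hcnt : \big[Rplus/0]_(lo <= i < hi) (if good i then 1 else 0) <= INR k.
  have := bigR_count good n; rewrite Hsplit.
  have := Hpos _ 0%N lo Hind; have := Hpos _ hi n Hind.
  have : INR (count good (iota 0 n)) <= INR k by apply: le_INR; apply/leP; apply: ltnW.
  lra.
have Hconst : \big[Rplus/0]_(lo <= i < hi) 1 = 2 * INR k.
  by rewrite /hi bigR_const_nat mult_INR /=; ring.
rewrite -bigR_sub Hconst in Hmid.
rewrite /bad_primitive Hsplit.
have := Hpos _ 0%N lo Hbad; have := Hpos _ hi n Hbad.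
have : c * INR k <= c * (2 * INR k - \big[Rplus/0]_(lo <= i < hi) (if good i then 1 else 0)).
  by apply: Rmult_le_compat_l => //; lra.
lra.
Qed.

(* Lower bound for bad_primitive when fewer than k cells are good: the 2k
   cells of the two dyadic blocks below the block of x each contribute at
   least x^2/(256 k^2). *)
Lemma bad_primitive_lower n good x :
  (count good (iota 0 n) < k)%N -> 4 * L < x -> x <= grid_pt L k n ->
  x ^ 2 / (256 * INR k) <= bad_primitive n good x.
Proof.
move=> Hcount Hx Hxn; have Hk' := INR_k_pos Hk.
have HLx : L < x by lra.
have [j [Hjn Hj]] := grid_cell_of HLx Hxn.
set m := (j %/ k)%N.
have Hblock2 : grid_pt L k (2 * k) = 4 * L.
  have := grid_pt_block L Hk 2 (leq0n k); rewrite addn0 => ->; simpl; field; lra.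
have Hm2 : (2 <= m)%N.
  rewrite leqNgt; apply/negP => Hlt.
  have Hj2 : (j.+1 <= 2 * k)%N by move: Hlt; rewrite /m ltn_divLR //; lia.
  have := grid_pt_mono HL Hk Hj2; rewrite Hblock2; lra.
have HmK : (m * k <= j)%N by rewrite /m leq_divM.
have HjK : (j.+1 <= m.+1 * k)%N by rewrite -ltn_divLR.
set lo := ((m - 2) * k)%N.
have Hhi : (lo + 2 * k = m * k)%N by rewrite /lo -mulnDl subnK.
have Hxub : x <= 8 * (L * 2 ^ (m - 2)%N).
  have := grid_pt_mono HL Hk HjK; rewrite -[(m.+1 * k)%N]addn0 grid_pt_block //.
  have -> : m.+1 = ((m - 2) + 3)%N by lia.
  rewrite pow_add /=; lra.
have Hc : 0 <= x ^ 2 / (256 * INR k ^ 2).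
  by apply: Rmult_le_pos; [nra | apply: Rlt_le; apply: Rinv_0_lt_compat; nra].
have := bad_primitive_block Hcount (n := n) (lo := lo) ltac:(rewrite Hhi; lia) Hc.
have -> : x ^ 2 / (256 * INR k ^ 2) * INR k = x ^ 2 / (256 * INR k) by field; lra.
apply=> i /andP [H1 H2]; apply: cell_primitive_full.
  apply: Rle_trans (proj1 Hj); apply: grid_pt_mono => //; lia.
have Hdiv : (m - 2 <= i %/ k)%N by rewrite leq_divRL.
have Hpow : 2 ^ (m - 2)%N <= 2 ^ (i %/ k)%N by apply: Rle_pow; [lra | apply/leP].
rewrite /cell_width.
have -> : 8 * INR k * (L * 2 ^ (i %/ k) / INR k) = 8 * (L * 2 ^ (i %/ k)) by field; lra.
have := Rmult_le_compat_l _ _ _ (Rlt_le _ _ HL) Hpow; lra.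
Qed.

End Cells.

Section CellFunctions.
Variables (V : finType) (w : V -> V -> R) (f : V -> R) (L : R) (k : nat).
Hypotheses (Hw : weighted_graph w) (HL : 0 < L) (Hk : (0 < k)%N).

Definition cell_fn (j : nat) (v : V) : R := cell_tent L k j (f v).

Lemma cell_fn_support j v : cell_fn j v <> 0 -> grid_pt L k j < f v < grid_pt L k j.+1.
Proof. exact: (tent_support (grid_pt_le_S HL Hk j)). Qed.

Lemma cell_fns_disjoint i j : i <> j -> forall v, cell_fn i v = 0 \/ cell_fn j v = 0.
Proof.
move=> Hij v.
case: (Req_EM_T (cell_fn i v) 0) => Hi; first by left.
case: (Req_EM_T (cell_fn j v) 0) => Hj; first by right.
have := cell_fn_support Hi; have := cell_fn_support Hj.
case: (ltngtP i j) => [Hc|Hc|Hc]; last by [].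
- have := grid_pt_mono HL Hk Hc; lra.
- have := grid_pt_mono HL Hk Hc; lra.
Qed.

Lemma cell_energies_le n :
  \big[Rplus/0]_(0 <= j < n) edge_energy w (cell_fn j) <= edge_energy w f.
Proof.
rewrite /edge_energy -bigR_scal; apply: Rmult_le_compat_l; first lra.
rewrite /sumR exchange_big /=.
apply: bigR_le => u _; rewrite exchange_big /=; apply: bigR_le => v _.
rewrite -bigR_scal; apply: Rmult_le_compat_l; first exact: weight_ge0.
exact: cell_tents_energy.
Qed.

Lemma bad_primitive_variation n good lam : 0 < lam ->
  variation w (fun v => bad_primitive L k n good (f v)) <=
  (2 + lam) * edge_energy w f +
  2 / lam * \big[Rplus/0]_(0 <= j < n) (if good j then 0 else normw2 w (cell_fn j)).
Proof.
move=> Hl.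
set X := fun j u v =>
  if good j then 0 else w u v * (cell_fn j v ^ 2 + cell_fn j u ^ 2).
set G := fun u v => (1 + lam / 2) * (w u v * (f u - f v) ^ 2) +
  / lam * \big[Rplus/0]_(0 <= j < n) X j u v.
apply: Rle_trans (_ : sumR predT (fun u => sumR predT (fun v => G u v)) <= _).
  apply: sumR_le => u _; apply: sumR_le => v _.
  have H := bad_primitive_increment HL Hk n good (f v) (f u) Hl.
  apply: Rle_trans (Rmult_le_compat_l _ _ _ (weight_ge0 Hw u v) H) _.
  rewrite /G Rmult_plus_distr_l; apply: Rplus_le_compat; first (apply: Req_le; ring).
  rewrite -Rmult_assoc (Rmult_comm (w u v)) Rmult_assoc bigR_scal.
  apply: Req_le; congr (_ * _); apply: eq_bigr => j _.
  by rewrite /X /cell_fn; case: (good j); ring.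
have E1 : sumR predT (fun u => sumR predT (fun v => G u v)) =
  sumR predT (fun u => sumR predT (fun v => (1 + lam / 2) * (w u v * (f u - f v) ^ 2))) +
  / lam * sumR predT (fun u => sumR predT (fun v => \big[Rplus/0]_(0 <= j < n) X j u v)).
  rewrite /G sumR_scal -sumR_add; apply: sumR_ext => u.
  by rewrite sumR_scal -sumR_add.
have E2 : sumR predT (fun u => sumR predT (fun v => (1 + lam / 2) * (w u v * (f u - f v) ^ 2)))
    = (1 + lam / 2) * (2 * edge_energy w f).
  rewrite /edge_energy.
  have -> : forall S, 2 * (/ 2 * S) = S by move=> S; field.
  by rewrite sumR_scal; apply: sumR_ext => u; rewrite sumR_scal.
have E3 : sumR predT (fun u => sumR predT (fun v => \big[Rplus/0]_(0 <= j < n) X j u v)) =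
    \big[Rplus/0]_(0 <= j < n) sumR predT (fun u => sumR predT (fun v => X j u v)).
  rewrite /sumR; under eq_bigr => u _ do rewrite exchange_big.
  by rewrite exchange_big.
have E4 j : sumR predT (fun u => sumR predT (fun v => X j u v)) =
    2 * (if good j then 0 else normw2 w (cell_fn j)).
  rewrite /X; case: (good j).
    by rewrite Rmult_0_r sumR_zero // => u _; rewrite sumR_zero.
  rewrite /normw2 -(pair_sum Hw).
  by apply: sumR_ext => u; apply: sumR_ext => v; ring.
rewrite E1 E2 E3; under eq_bigr => j _ do rewrite E4.
rewrite -bigR_scal; apply: Req_le; field; lra.
Qed.

End CellFunctions.

Section Alternatives.
Variables (V : finType) (w : V -> V -> R) (f : V -> R) (L : R) (k : nat) (X : R).
Hypotheses (Hw : weighted_graph w) (HL : 0 < L) (Hk : (0 < k)%N).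

Definition good_cell (j : nat) : bool :=
  Rltb 0 (normw2 w (cell_fn f L k j)) &&
  Rleb (edge_energy w (cell_fn f L k j)) (X * normw2 w (cell_fn f L k j)).

Lemma good_cell_spec j : good_cell j ->
  (exists v, cell_fn f L k j v <> 0) /\ rayleigh w (cell_fn f L k j) <= X.
Proof.
move=> /andP [/RltbP Hm /RlebP HE]; split.
  apply: NNPP => Hnone; suff : normw2 w (cell_fn f L k j) = 0 by lra.
  apply: sumR_zero => v _.
  have -> : cell_fn f L k j v = 0 by apply: NNPP => Hv; apply: Hnone; exists v.
  ring.
apply: (Rmult_le_reg_r (normw2 w (cell_fn f L k j))) => //.
rewrite /rayleigh /Rdiv Rmult_assoc Rinv_l; lra.
Qed.

Lemma bad_cell_norm j : 0 < X ->
  (if good_cell j then 0 else normw2 w (cell_fn f L k j)) <=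
  edge_energy w (cell_fn f L k j) / X.
Proof.
move=> HX; have HE := edge_energy_ge0 Hw (cell_fn f L k j).
have HEX : 0 <= edge_energy w (cell_fn f L k j) / X.
  by apply: Rmult_le_pos => //; apply: Rlt_le; apply: Rinv_0_lt_compat.
case Hg: (good_cell j) => //.
apply: Rnot_lt_le => Hlt; move: Hg; rewrite /good_cell.
have HEm : edge_energy w (cell_fn f L k j) <= X * normw2 w (cell_fn f L k j).
  have := Rmult_lt_compat_l _ _ _ HX Hlt.
  have -> : X * (edge_energy w (cell_fn f L k j) / X) = edge_energy w (cell_fn f L k j).
    by field; lra.
  lra.
have Hm : 0 < normw2 w (cell_fn f L k j) by lra.
by rewrite (proj2 (RltbP _ _) Hm) (proj2 (RlebP _ _) HEm).
Qed.

Lemma many_good_cells n : (k <= count good_cell (iota 0 n))%N ->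
  exists (F : nat -> V -> R) (a b : nat -> R),
    (forall i j, (i < k)%N -> (j < k)%N -> i <> j ->
       forall v, F i v = 0 \/ F j v = 0) /\
    (forall i, (i < k)%N ->
       (exists v, F i v <> 0) /\
       (forall v, F i v <> 0 -> f v <> 0) /\
       rayleigh w (F i) <= X /\
       0 < a i /\ a i < b i /\
       1 / 2 * a i / INR k <= b i - a i /\ b i - a i <= 1 * a i / INR k /\
       (forall v, F i v <> 0 -> a i <= f v <= b i)).
Proof.
move=> Hcount; set s := [seq j <- iota 0 n | good_cell j].
have Hsize : (k <= size s)%N by rewrite size_filter.
have Huniq : uniq s by apply: filter_uniq; apply: iota_uniq.
have Hgood i : (i < k)%N -> good_cell (nth 0%N s i).
  move=> Hi; have : nth 0%N s i \in s by apply: mem_nth; apply: leq_trans Hsize.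
  by rewrite mem_filter => /andP [].
exists (fun i => cell_fn f L k (nth 0%N s i)), (fun i => grid_pt L k (nth 0%N s i)),
  (fun i => grid_pt L k (nth 0%N s i).+1).
split.
  move=> i i' Hi Hi' Hne; apply: cell_fns_disjoint => // Heq; apply: Hne; apply/eqP.
  by rewrite -(nth_uniq 0%N _ _ Huniq) ?Heq //; apply: leq_trans Hsize.
move=> i Hi; set j := nth 0%N s i.
have [Hnz Hray] := good_cell_spec (Hgood i Hi).
have [Hw1 Hw2] := cell_width_ratio HL Hk j.
have Hpos := grid_pt_pos HL Hk j; have Hwpos := cell_width_pos HL Hk j.
have Hsupp v := @cell_fn_support V f L k HL Hk j v.
have HS := grid_pt_S L k j.
split; first done.
split; first by move=> v /Hsupp; lra.
split; first done.
do 4 (split; first lra).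
by move=> v /Hsupp; lra.
Qed.

Section FewGoodCells.
Variables (n : nat) (phi : R).
Hypotheses (Hdeg : forall v, 1 <= deg w v)
  (Hvol : vol w (supp f) <= vol w predT / 2)
  (Hphi : forall t, nontrivial (level_set f t) -> phi <= conductance w (level_set f t))
  (Hlow : forall v, f v <> 0 -> 4 * L < f v) (Htop : forall v, f v <= grid_pt L k n)
  (Hfew : (count good_cell (iota 0 n) < k)%N).

Let h (v : V) : R := bad_primitive L k n good_cell (f v).

(* Co-area inequality and the lower bound on bad_primitive:
   variation(h) >= 2 phi mass(h) >= phi N / (128 k). *)
Lemma few_cells_variation_lower : 0 <= phi ->
  phi * normw2 w f / (128 * INR k) <= variation w h.
Proof.
move=> Hphi0; have Hk' := INR_k_pos Hk.
have Hh0 v : 0 <= h v by apply: (bad_primitive_ge0 HL Hk).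
have Hmon u v : f u <= f v -> h u <= h v by apply: (bad_primitive_mono HL Hk).
have Hzero v : f v = 0 -> h v = 0 by move=> Hv; apply: (bad_primitive_low HL Hk); lra.
have Hsupp v : h v <> 0 -> f v <> 0 by move=> Hv Hfv; apply: Hv; apply: Hzero.
have Hco := coarea_inequality Hw Hdeg Hvol Hphi Hh0 Hmon Hsupp.
have Hmass : normw2 w f / (256 * INR k) <= mass w h.
  rewrite /normw2 /Rdiv Rmult_comm sumR_scal; apply: sumR_le => v _.
  rewrite Rmult_comm Rmult_assoc; apply: Rmult_le_compat_l; first exact: deg_ge0.
  case: (Req_EM_T (f v) 0) => Hfv.
    by rewrite (Hzero v Hfv) Hfv; lra.
  by have := bad_primitive_lower HL Hk Hfew (Hlow Hfv) (Htop v); rewrite /h /Rdiv; lra.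
have := Rmult_le_compat_l _ _ _ (ltac:(lra) : 0 <= 2 * phi) Hmass.
have -> : 2 * phi * (normw2 w f / (256 * INR k)) = phi * normw2 w f / (128 * INR k).
  by field; lra.
lra.
Qed.

(* Upper bound: each bad tent has squared norm at most E(T_j)/X and the
   energies of all tents add up to at most E(f). *)
Lemma few_cells_variation_upper lam : 0 < lam -> 0 < X ->
  variation w h <= (2 + lam) * edge_energy w f + 2 / lam * (edge_energy w f / X).
Proof.
move=> Hl HX; apply: Rle_trans (bad_primitive_variation f Hw HL Hk n good_cell Hl) _.
apply: Rplus_le_compat_l; apply: Rmult_le_compat_l.
  by apply: Rlt_le; apply: Rdiv_lt_0_compat; lra.
apply: Rle_trans (_ : \big[Rplus/0]_(0 <= j < n) (edge_energy w (cell_fn f L k j) / X) <= _).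
  by apply: bigR_le => j _; apply: bad_cell_norm.
have -> : \big[Rplus/0]_(0 <= j < n) (edge_energy w (cell_fn f L k j) / X) =
          / X * \big[Rplus/0]_(0 <= j < n) edge_energy w (cell_fn f L k j).
  by rewrite bigR_scal; apply: eq_bigr => j _; rewrite /Rdiv Rmult_comm.
rewrite [_ / X]Rmult_comm; apply: Rmult_le_compat_l.
  by apply: Rlt_le; apply: Rinv_0_lt_compat.
exact: cell_energies_le.
Qed.

(* The arithmetic concluding the co-area argument: with lam = phi/(512 k R)
   and X = 2^20 k^2 R / delta, the two sides give 8 phi <= 2048 k R + 3 phi. *)
Lemma final_arithmetic (ph Rf N K : R) : 0 < ph -> 0 < Rf -> 0 < N -> 0 < K ->
  ph * N / (128 * K) <=
    (2 + ph / (512 * K * Rf)) * (Rf * N) +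
    2 / (ph / (512 * K * Rf)) * (Rf * N / (1048576 * K ^ 2 * Rf / (ph ^ 2 / Rf))) ->
  ph <= 1048576 * K * Rf.
Proof.
move=> Hp HR HN HK H.
have Hs : 0 < 1024 * K / N by apply: Rdiv_lt_0_compat; lra.
have := Rmult_le_compat_r _ _ _ (Rlt_le _ _ Hs) H.
have -> : ph * N / (128 * K) * (1024 * K / N) = 8 * ph by field; lra.
have -> : ((2 + ph / (512 * K * Rf)) * (Rf * N) +
    2 / (ph / (512 * K * Rf)) * (Rf * N / (1048576 * K ^ 2 * Rf / (ph ^ 2 / Rf)))) *
    (1024 * K / N) = 2048 * (K * Rf) + 3 * ph.
  by field; repeat split; lra.
have := Rmult_lt_0_compat _ _ HK HR; lra.
Qed.

Lemma few_good_cells : 0 < rayleigh w f ->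
  X = 1048576 * INR k ^ 2 * rayleigh w f / (phi ^ 2 / rayleigh w f) ->
  phi <= 1048576 * INR k * rayleigh w f.
Proof.
move=> HR HX; have Hk' := INR_k_pos Hk.
have HkR : 0 < INR k * rayleigh w f by apply: Rmult_lt_0_compat.
case: (Rle_dec phi 0) => Hphi0; first lra.
have HN : 0 < normw2 w f.
  case: (Rle_lt_or_eq_dec _ _ (normw2_ge0 Hw f)) => // HN; move: HR.
  by rewrite /rayleigh -HN /Rdiv Rinv_0; lra.
have HE : edge_energy w f = rayleigh w f * normw2 w f by rewrite /rayleigh; field; lra.
have Hlam : 0 < phi / (512 * INR k * rayleigh w f) by apply: Rdiv_lt_0_compat; lra.
have HXpos : 0 < X.
  rewrite HX; apply: Rdiv_lt_0_compat; last by apply: Rdiv_lt_0_compat; nra.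
  by have := pow_lt _ 2 Hk'; nra.
have := Rle_trans _ _ _ (few_cells_variation_lower (Rlt_le _ _ (Rnot_le_lt _ _ Hphi0)))
          (few_cells_variation_upper Hlam HXpos).
rewrite HE {1}HX; apply: final_arithmetic => //; lra.
Qed.

End FewGoodCells.
End Alternatives.

(* Main theorem, with C = 2^20, c1 = 1/2, c2 = 1.  The grid starts below a
   quarter of the least positive value of f and ends at sum_v f v, an upper
   bound of f; the count of good cells decides between the alternatives. *)
Theorem mainTheorem9 :
  exists C c1 c2 : R, 0 < C /\ 0 < c1 /\ 0 < c2 /\
  forall (V : finType) (w : V -> V -> R),
    weighted_graph w ->
    (forall v, 1 <= deg w v) ->
  forall (k : nat), (1 <= k)%nat ->
  forall (f : V -> R),
    (forall v, 0 <= f v) ->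
    vol w (supp f) <= vol w predT / 2 ->
    0 < rayleigh w f ->
  forall phif : R, is_phi_f w f phif ->
  let delta := phif ^ 2 / rayleigh w f in
    phif <= C * INR k * rayleigh w f
    \/
    exists (F : nat -> V -> R) (a b : nat -> R),
      (forall i j, (i < k)%nat -> (j < k)%nat -> i <> j ->
         forall v, F i v = 0 \/ F j v = 0) /\
      (forall i, (i < k)%nat ->
         (exists v, F i v <> 0) /\
         (forall v, F i v <> 0 -> f v <> 0) /\
         rayleigh w (F i) <= C * INR k ^ 2 * rayleigh w f / delta /\
         0 < a i /\ a i < b i /\
         c1 * a i / INR k <= b i - a i /\ b i - a i <= c2 * a i / INR k /\
         (forall v, F i v <> 0 -> a i <= f v <= b i)).
Proof.
exists 1048576, (1 / 2), 1; split; [lra | split; [lra | split; [lra |]]].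
move=> V w Hw Hdeg k Hk f Hf0 Hvol HR phif [_ Hphi] delta.
have [v0 Hv0] := rayleigh_pos_support HR.
have [mu [Hmu Hmin]] := min_positive_value Hf0 Hv0.
have Hsum v : f v <= sumR predT f by apply: sumR_ge_term => // u _; apply: Hf0.
have [L [n [HL [HLmu Htop]]]] :=
  grid_covering Hk Hmu (Rle_trans _ _ _ (Hmin v0 Hv0) (Hsum v0)).
set X := 1048576 * INR k ^ 2 * rayleigh w f / delta.
case: (leqP k (count (good_cell w f L k X) (iota 0 n))) => Hcount.
  by right; apply: (many_good_cells HL Hk Hcount).
left; apply: (few_good_cells Hw HL Hk Hdeg Hvol Hphi _ _ Hcount HR erefl).
- by move=> v /Hmin; lra.
- by move=> v; rewrite Htop.
Qed.
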